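(* Let $\rho\colon\mathcal{F}\to[\Lambda]^\omega$ with $\mathcal{F}\subseteq[\Omega]^\omega$ be a partition regular function. (1) If $\rho\in(S_2)$, then $\rho\in(S_1)$. (2) For every ideal $\mathcal{I}$ on a countably infinite set $\Lambda$, the function $\rho_{\mathcal{I}}$ belongs to $(S_2)$. (3) If $\rho\in P^-$ and $\rho$ has small accretions, then $\rho\in(S_2)$.
   Context: An ideal on a nonempty set $X$ is a family $\mathcal{I}\subseteq\mathcal{P}(X)$ with $\emptyset\in\mathcal{I}$, $X\notin\mathcal{I}$, closed under finite unions and subsets, and containing all finite subsets of $X$; $\mathcal{I}^+=\mathcal{P}(X)\setminus\mathcal{I}$. $[A]^\omega$ denotes the countably infinite subsets of $A$, $[A]^{<\omega}$ the finite subsets. Partition regular function: $\Lambda,\Omega$ are countably infinite sets, $\mathcal{F}$ is a nonempty family of infinite subsets of $\Omega$ with $F\setminus K\in\mathcal{F}$ for all $F\in\mathcal{F}$ and finite $K\subseteq\Omega$. A function $\rho\colon\mathcal{F}\to[\Lambda]^\omega$ is partition regular if (M) $E\subseteq F$ implies $\rho(E)\subseteq\rho(F)$ for $E,F\in\mathcal{F}$; (R) whenever $F\in\mathcal{F}$ and $\rho(F)=A\cup B$ with $A,B\subseteq\Lambda$, there is $E\in\mathcal{F}$ with $\rho(E)\subseteq A$ or $\rho(E)\subseteq B$; (S) for every $E\in\mathcal{F}$ there is $F\in\mathcal{F}$ with $F\subseteq E$ such that for every $a\in\rho(F)$ there is a finite $K\subseteq\Omega$ with $a\notin\rho(F\setminus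 K)$. Put $\mathcal{I}_\rho=\{A\subseteq\Lambda:\forall F\in\mathcal{F}\ \rho(F)\not\subseteq A\}$ (an ideal on $\Lambda$). For an ideal $\mathcal{I}$ on $\Lambda$, $\rho_{\mathcal{I}}\colon\mathcal{I}^+\to[\Lambda]^\omega$ is $\rho_{\mathcal{I}}(A)=A$ (here $\Omega=\Lambda$, $\mathcal{F}=\mathcal{I}^+$). $\rho$ has small accretions if for every $E\in\mathcal{F}$ there is $F\in\mathcal{F}$ with $F\subseteq E$ such that $\rho(F)\setminus\rho(F\setminus K)\in\mathcal{I}_\rho$ for every finite $K\subseteq\Omega$. $\rho\in P^-$ means: for every decreasing sequence $A_0\supseteq A_1\supseteq\dots$ of subsets of $\Lambda$ with $A_0\notin\mathcal{I}_\rho$ and $A_n\setminus A_{n+1}\in\mathcal{I}_\rho$ for all $n$, there is $F\in\mathcal{F}$ with $\rho(F)\subseteq A_0$ such that for each $n$ there is a finite $K\subseteq\Omega$ with $\rho(F\setminus K)\subseteq A_n$. $\rho\in(S_1)$ means: for every $E\in\mathcal{F}$ there is $F\in\mathcal{F}$, $F\subseteq E$, such that for every $A\in\mathcal{I}_\rho$ there is $G\in\mathcal{F}$ with $\rho(G)\subseteq\rho(F)\setminus A$ and for every finite $K\subseteq\Omega$ there is a finite $L\subseteq\Omega$ with $\rho(G\setminus L)\subseteq\rho(F\setminus K)$. $\rho\in(S_2)$ means: for every $E\in\mathcal{F}$ there is $F\in\mathcal{F}$, $F\subseteq E$, such that for every $B\subseteq\rho(F)$ with $B\notin\mathcal{I}_\rho$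 there is $G\in\mathcal{F}$ with $\rho(G)\subseteq B$ and for every finite $K\subseteq\Omega$ there is a finite $L\subseteq\Omega$ with $\rho(G\setminus L)\subseteq\rho(F\setminus K)$. *)

From mathcomp Require Import all_boot.
From mathcomp Require Import boolp classical_sets cardinality.
Set Implicit Arguments. Unset Strict Implicit. Unset Printing Implicit Defensive.
Local Open Scope classical_set_scope.

Definition countably_infinite (T : Type) : Prop :=
  countable [set: T] /\ infinite_set [set: T].

Definition ideal (X : Type) (I : set (set X)) : Prop :=
  I set0 /\ ~ I [set: X] /\
  (forall A B, I A -> I B -> I (A `|` B)) /\
  (forall A B, A `<=` B -> I B -> I A) /\
  (forall A, finite_set A -> I A).

(* rho : F -> [Lambda]^omega, represented as a total map on set Omega of which
   only the values on members of F matter. *)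
Section PRF.
Variables (Lam Om : Type) (F : set (set Om)) (rho : set Om -> set Lam).

Definition partition_regular : Prop :=
  (exists E, F E) /\
  (forall E, F E -> infinite_set E) /\
  (forall E K, F E -> finite_set K -> F (E `\` K)) /\
  (forall E, F E -> infinite_set (rho E)) /\
  (forall E G, F E -> F G -> E `<=` G -> rho E `<=` rho G) /\
  (* (R) *)
  (forall E A B, F E -> rho E = A `|` B ->
     exists G, F G /\ (rho G `<=` A \/ rho G `<=` B)) /\
  (forall E, F E -> exists G, F G /\ G `<=` E /\
     forall a, rho G a -> exists K, finite_set K /\ ~ rho (G `\` K) a).

Definition I_rho : set (set Lam) := fun A => forall E, F E -> ~ (rho E `<=` A).

Definition small_accretions : Prop :=
  forall E, F E -> exists G, F G /\ G `<=` E /\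
    forall K, finite_set K -> I_rho (rho G `\` rho (G `\` K)).

Definition P_minus : Prop :=
  forall A : nat -> set Lam,
    (forall n, A n.+1 `<=` A n) -> ~ I_rho (A 0) ->
    (forall n, I_rho (A n `\` A n.+1)) ->
    exists G, F G /\ rho G `<=` A 0 /\
      forall n, exists K, finite_set K /\ rho (G `\` K) `<=` A n.

Definition S1 : Prop :=
  forall E, F E -> exists G, F G /\ G `<=` E /\
    forall A, I_rho A -> exists H, F H /\ rho H `<=` rho G `\` A /\
      forall K, finite_set K -> exists L, finite_set L /\
        rho (H `\` L) `<=` rho (G `\` K).

Definition S2 : Prop :=
  forall E, F E -> exists G, F G /\ G `<=` E /\
    forall B, B `<=` rho G -> ~ I_rho B -> exists H, F H /\ rho H `<=` B /\
      forall K, finite_set K -> exists L, finite_set L /\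
        rho (H `\` L) `<=` rho (G `\` K).
End PRF.

Definition Iplus (Lam : Type) (I : set (set Lam)) : set (set Lam) := fun A => ~ I A.
Definition rho_I (Lam : Type) (A : set Lam) : set Lam := A.

(* (1) holds because I_rho is an ideal by (R): taking out a small set A from
   rho G leaves a set that is still not small, to which (S2) applies.
   (2) is (S2) with G = E and H = B, since I_rho for rho_I is I itself.
   (3) Enumerate Omega and let K_n be its first n points. For B not small
   inside rho G, with G given by small accretions, the sets
   A_n = B `&` rho (G `\` K_n) decrease, start at B and lose only small sets,
   so P^- yields H with rho H `<=` B whose tails eventually lie in every
   rho (G `\` K_n), hence in rho (G `\` K) for every finite K. *)
From mathcomp Require Import all_boot.
From mathcomp Require Import boolp classical_sets cardinality.
Set Implicit Arguments. Unset Strict Implicit. Unset Printing Implicit Defensive.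
Local Open Scope classical_set_scope.

Lemma finite_nat_bounded (K : set nat) :
  finite_set K -> exists n, forall m, K m -> (m < n)%N.
Proof.
move=> /finite_seqP[s ->]; exists (foldr maxn 0 s).+1.
elim: s => [//|a s IH] m /=; rewrite inE => /orP[/eqP->|ms].
  by rewrite ltnS leq_maxl.
by apply: leq_trans (IH m ms) _; rewrite ltnS leq_maxr.
Qed.

Lemma countable_finite_exhaustion (T : Type) : countable [set: T] ->
  exists K : nat -> set T, K 0 = set0 /\ (forall n, finite_set (K n)) /\
    (forall n, K n `<=` K n.+1) /\
    (forall A, finite_set A -> exists n, A `<=` K n).
Proof.
move=> /countable_injP[f finj].
have f_inj : injective f by move=> x y; apply: finj; rewrite inE.
exists (fun n => f @^-1` [set m | (m < n)%N]); split; last split; last split.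
- by apply/seteqP; split => x.
- move=> n; apply: finite_preimage; first by move=> x y _ _; apply: f_inj.
  exact: (@sub_finite_set _ _ `I_n).
- by move=> n x /= /ltnW.
- move=> A /(finite_image f)/finite_nat_bounded[n fA_lt_n].
  by exists n => x Ax; apply: fA_lt_n; exists x.
Qed.

Section IRho.
Variables (Lam Om : Type) (F : set (set Om)) (rho : set Om -> set Lam).
Local Notation I_rho := (I_rho F rho).

Lemma I_rhoS (X Y : set Lam) : X `<=` Y -> I_rho Y -> I_rho X.
Proof. by move=> XY IY E FE rhoEX; apply: (IY E FE); apply: subset_trans XY. Qed.

Lemma not_I_rho_rho (E : set Om) : F E -> ~ I_rho (rho E).
Proof. by move=> FE IE; exact: IE FE _. Qed.

Hypothesis rho_R : forall E A B, F E -> rho E = A `|` B ->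
  exists G, F G /\ (rho G `<=` A \/ rho G `<=` B).

Lemma I_rho_setU (X Y : set Lam) : I_rho X -> I_rho Y -> I_rho (X `|` Y).
Proof.
move=> IX IY E FE rhoEXY.
have rhoE_split : rho E = (rho E `&` X) `|` (rho E `&` Y).
  by rewrite -setIUr; apply/esym/setIidl.
have [G [FG [rhoGX|rhoGY]]] := rho_R FE rhoE_split.
- by apply: (IX G FG) => x /rhoGX[].
- by apply: (IY G FG) => x /rhoGY[].
Qed.

Lemma not_I_rho_setD (B A : set Lam) : ~ I_rho B -> I_rho A -> ~ I_rho (B `\` A).
Proof.
move=> nIB IA IBA; apply/nIB/(I_rhoS _ (I_rho_setU IBA IA)) => x Bx.
by have [Ax|nAx] := pselect (A x); [right|left].
Qed.

Lemma S2_S1 : S2 F rho -> S1 F rho.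
Proof.
move=> s2 E FE; have [G [FG [GE S2G]]] := s2 E FE.
exists G; split => //; split => // A IA.
exact: S2G (@subDsetl _ _ A) (not_I_rho_setD (not_I_rho_rho FG) IA).
Qed.

End IRho.

Lemma I_rho_rho_I (Lam : Type) (I : set (set Lam)) :
  (forall A B, A `<=` B -> I B -> I A) -> I_rho (Iplus I) (@rho_I Lam) = I.
Proof.
move=> I_sub; apply/funext => A; apply/propext; split.
- by move=> IA; apply: contrapT => nIA; exact: (IA A nIA).
- by move=> IA B nIB BA; apply/nIB/(I_sub _ _ BA).
Qed.

Lemma rho_I_S2 (Lam : Type) (I : set (set Lam)) :
  (forall A B, A `<=` B -> I B -> I A) -> S2 (Iplus I) (@rho_I Lam).
Proof.
move=> I_sub E FE; exists E; split => //; split => // B BE.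
rewrite I_rho_rho_I // => nIB; exists B; split => //; split => // K fK.
by exists K; split => // x [Bx Kx]; split => //; apply: BE.
Qed.

Section SmallAccretions.
Variables (Lam Om : Type) (F : set (set Om)) (rho : set Om -> set Lam).
Hypothesis F_setD : forall E K, F E -> finite_set K -> F (E `\` K).
Hypothesis rho_M : forall E G, F E -> F G -> E `<=` G -> rho E `<=` rho G.

Lemma rho_setDS (G K K' : set Om) : F G -> finite_set K -> finite_set K' ->
  K' `<=` K -> rho (G `\` K) `<=` rho (G `\` K').
Proof.
move=> FG fK fK' K'K; apply: rho_M; [exact: F_setD|exact: F_setD|].
by move=> x [Gx nKx]; split => // /K'K.
Qed.

Lemma P_minus_small_accretions_S2 : countable [set: Om] ->
  P_minus F rho -> small_accretions F rho -> S2 F rho.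
Proof.
move=> /countable_finite_exhaustion[K [K0 [fK [K_incr K_exh]]]] Pm sa E FE.
have [G [FG [GE G_small]]] := sa E FE.
exists G; split => //; split => // B BG nIB.
pose A n := B `&` rho (G `\` K n).
have A0 : A 0 = B.
  rewrite /A K0 setD0; apply/seteqP; split => [x []//|x Bx].
  by split => //; apply: BG.
have A_decr n : A n.+1 `<=` A n.
  by move=> x [Bx rhox]; split => //; apply: (rho_setDS FG (fK _) (fK _) (K_incr n)).
have A_small n : I_rho F rho (A n `\` A n.+1).
  apply: I_rhoS (G_small _ (fK n.+1)) => x [[Bx _] nAx].
  by split; [apply: BG|move=> rhox; apply: nAx].
have [H [FH [HB H_tails]]] := Pm A A_decr ltac:(by rewrite A0) A_small.
exists H; split => //; split; first by rewrite -A0.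
move=> K' fK'; have [n K'Kn] := K_exh K' fK'.
have [L [fL HL]] := H_tails n; exists L; split => //.
by move=> x /HL[_]; apply: rho_setDS.
Qed.

End SmallAccretions.

Theorem proposition2p6 :
  (forall (Lam Om : Type) (F : set (set Om)) (rho : set Om -> set Lam),
     countably_infinite Lam -> countably_infinite Om ->
     partition_regular F rho -> S2 F rho -> S1 F rho) /\
  (forall (Lam : Type) (I : set (set Lam)),
     countably_infinite Lam -> ideal I -> S2 (Iplus I) (@rho_I Lam)) /\
  (forall (Lam Om : Type) (F : set (set Om)) (rho : set Om -> set Lam),
     countably_infinite Lam -> countably_infinite Om ->
     partition_regular F rho -> P_minus F rho -> small_accretions F rho ->
     S2 F rho).
Proof.
split; last split.
- by move=> Lam Om F rho _ _ [_ [_ [_ [_ [_ [rho_R _]]]]]]; apply: S2_S1.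
- by move=> Lam I _ [_ [_ [_ [I_sub _]]]]; apply: rho_I_S2.
- move=> Lam Om F rho _ [countOm _] [_ [_ [F_setD [_ [rho_M _]]]]].
  exact: P_minus_small_accretions_S2.
Qed.
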